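(* Let $M$ be a Hausdorff topological abelian group. Let $f\colon[0,\infty)^n\to M$ be a function that in each variable (with the other variables fixed) is a continuous semigroup homomorphism $([0,\infty),+)\to M$. Then for any $i\neq j$ and any $a,\lambda_1,\ldots,\lambda_n\in[0,\infty)$, \[f(\lambda_1,\ldots,a\lambda_i,\ldots,\lambda_n)=f(\lambda_1,\ldots,a\lambda_j,\ldots,\lambda_n),\] where on the left $\lambda_i$ is replaced by $a\lambda_i$ and on the right $\lambda_j$ is replaced by $a\lambda_j$. Consequently $f(\lambda_1,\ldots,\lambda_n)=g(\lambda_1\cdots\lambda_n)$, where $g\colon[0,\infty)\to M$ is the homomorphism $g(\lambda)=f(\lambda,1,\ldots,1)$. *)

From HB Require Import structures.
From mathcomp Require Import all_boot all_order all_algebra.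
From mathcomp Require Import all_classical all_reals all_analysis.
Set Implicit Arguments. Unset Strict Implicit. Unset Printing Implicit Defensive.
Import Order.TTheory GRing.Theory Num.Theory.
Local Open Scope ring_scope.

(* A point of [0,oo)^n is represented by lam : 'I_n -> R with nonnegative
   entries.  [upd lam i x] replaces the i-th coordinate of lam by x. *)
Definition upd (R : Type) (n : nat) (lam : 'I_n -> R) (i : 'I_n) (x : R) : 'I_n -> R :=
  fun k => if k == i then x else lam k.

Definition sep_cont_hom (R : realType) (M : topologicalZmodType) (n : nat)
  (f : ('I_n -> R) -> M) : Prop :=
  forall (i : 'I_n) (lam : 'I_n -> R), (forall k, 0 <= lam k) ->
    (forall x y : R, 0 <= x -> 0 <= y ->
       f (upd lam i (x + y)) = f (upd lam i x) + f (upd lam i y)) /\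
    {within `[0, +oo[%classic, continuous (fun x : R => f (upd lam i x))}%classic.

(* Freezing all coordinates of f except the i-th and the j-th gives a map
   F(x, y) which, on [0,oo), is additive and continuous in each variable.
   Cutting x and y into m equal parts gives F((t/m) x, y) = F(x, (t/m) y);
   approximating a >= 0 by such ratios, continuity in each variable and
   uniqueness of limits in the Hausdorff group M give F(a x, y) = F(x, a y).
   With a = lam_j this moves the j-th coordinate into the i-th one, replacing
   it by 1, without changing f or the product of the coordinates; doing so for
   every j <> i ends at the point whose i-th coordinate is the product of all
   the lam_k and whose other coordinates are 1. *)

From HB Require Import structures.
From mathcomp Require Import all_boot all_order all_algebra.
From mathcomp Require Import all_classical all_reals all_analysis.
From mathcomp Require Import lra ring.
Import Order.TTheory GRing.Theory Num.Theory numFieldNormedType.Exports.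
Local Open Scope ring_scope.
Local Open Scope classical_set_scope.
Set Implicit Arguments. Unset Strict Implicit.

Definition additive_nonneg (R : numDomainType) (M : zmodType) (h : R -> M) :=
  forall x y, 0 <= x -> 0 <= y -> h (x + y) = h x + h y.

Lemma additive_nonneg_natmul (R : numDomainType) (M : zmodType) (h : R -> M) :
  additive_nonneg h -> forall x m, 0 <= x -> h (x *+ m) = h x *+ m.
Proof.
move=> h_add x m x_ge0.
have h0 : h 0 = 0.
  by apply: (@addrI _ (h 0)); rewrite addr0 -h_add ?addr0.
elim: m => [|m IH]; first by rewrite !mulr0n.
by rewrite !mulrS h_add ?IH // mulrn_wge0.
Qed.

Section BiadditiveRatio.
Variables (R : numFieldType) (M : zmodType) (F : R -> R -> M).
Hypothesis F_addl : forall y, 0 <= y -> additive_nonneg (F^~ y).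
Hypothesis F_addr : forall x, 0 <= x -> additive_nonneg (F x).

Lemma biadditive_swap_ratio (t m : nat) x y : (0 < m)%N -> 0 <= x -> 0 <= y ->
  F (t%:R / m%:R * x) y = F x (t%:R / m%:R * y).
Proof.
move=> m_gt0 x_ge0 y_ge0; have m_neq0 : m%:R != 0 :> R by rewrite pnatr_eq0 -lt0n.
have natl u v k : 0 <= u -> 0 <= v -> F (u *+ k) v = F u v *+ k.
  by move=> u_ge0 v_ge0; exact: additive_nonneg_natmul (F_addl v_ge0) _ _ u_ge0.
have natr u v k : 0 <= u -> 0 <= v -> F u (v *+ k) = F u v *+ k.
  by move=> u_ge0 v_ge0; exact: additive_nonneg_natmul (F_addr u_ge0) _ _ v_ge0.
have split_m (z : R) : z = z / m%:R *+ m by rewrite -mulr_natr divfK.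
have scale_t (z : R) : t%:R / m%:R * z = z / m%:R *+ t by rewrite -mulr_natr; ring.
rewrite !scale_t {2}(split_m x) {1}(split_m y).
by rewrite natl ?natr ?[in RHS]natl ?[in RHS]natr ?mulrn_wge0 ?divr_ge0 // mulrnAC.
Qed.

End BiadditiveRatio.

Lemma within_continuous_cvg (T U : topologicalType) (A : set T) (h : T -> U)
    (I : Type) (G : set_system I) {FG : Filter G} (s : I -> T) (c : T) :
  {within A, continuous h} -> A c -> (forall k, A (s k)) -> s @ G --> c ->
  h (s k) @[k --> G] --> h c.
Proof.
move=> h_cont Ac sA s_cvg P /= hP.
have /= := (@subspace_continuousP _ _ _ h).1 h_cont c Ac _ hP.
rewrite /within /= => /s_cvg; apply: (filterS (F := G)) => k; exact.
Qed.

Definition trunc_ratio (R : archiNumDomainType) (a : R) (N : nat) : R :=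
  (Num.truncn (a * N.+1%:R))%:R / N.+1%:R.

Lemma trunc_ratio_ge0 (R : archiNumFieldType) (a : R) N : 0 <= trunc_ratio a N.
Proof. by rewrite divr_ge0. Qed.

Lemma trunc_ratio_cvg (R : archiRealFieldType) (a : R) : 0 <= a ->
  trunc_ratio a N @[N --> \oo] --> a.
Proof.
move=> a_ge0; apply/cvgrPdist_le => e e_gt0.
near=> N.
have : `|0 - harmonic N| <= e by near: N; exact: (cvgrPdist_le _ _).1 cvg_harmonic e e_gt0.
rewrite /= sub0r normrN ger0_norm // => /(le_trans _); apply.
have N1_gt0 : 0 < N.+1%:R :> R by [].
(* [0 <= a - trunc_ratio a N < 1 / N.+1] *)
have /andP[trunc_le trunc_gt] := truncn_itv (mulr_ge0 a_ge0 (ltW N1_gt0)).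
rewrite ger0_norm; last by rewrite subr_ge0 ler_pdivrMr.
rewrite -(ler_pM2r N1_gt0) mulrBl divfK ?mulVf ?gt_eqF //.
move: trunc_gt; rewrite -natr1; lra.
Unshelve. all: by end_near. Qed.

Section BiadditiveSwap.
Variables (R : realType) (M : topologicalZmodType) (F : R -> R -> M).
Hypothesis M_hausdorff : hausdorff_space M.
Hypothesis F_addl : forall y, 0 <= y -> additive_nonneg (F^~ y).
Hypothesis F_addr : forall x, 0 <= x -> additive_nonneg (F x).
Hypothesis F_contl :
  forall y, 0 <= y -> {within `[0, +oo[, continuous (F^~ y)}.
Hypothesis F_contr : forall x, 0 <= x -> {within `[0, +oo[, continuous (F x)}.

Lemma biadditive_swap a x y : 0 <= a -> 0 <= x -> 0 <= y ->
  F (a * x) y = F x (a * y).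
Proof.
move=> a_ge0 x_ge0 y_ge0.
have nonneg z : 0 <= z -> `[0, +oo[ z by rewrite /= in_itv /= andbT.
have approx z : 0 <= z -> trunc_ratio a N * z @[N --> \oo] --> a * z.
  by move=> z_ge0; apply: cvgMr_tmp; exact: trunc_ratio_cvg.
have approx_ge0 z N : 0 <= z -> `[0, +oo[ (trunc_ratio a N * z).
  by move=> z_ge0; apply: nonneg; rewrite mulr_ge0 ?trunc_ratio_ge0.
have cvgl : F (trunc_ratio a N * x) y @[N --> \oo] --> F (a * x) y.
  apply: (within_continuous_cvg (F_contl y_ge0)); last exact: approx.
    exact/nonneg/mulr_ge0.
  by move=> N; exact: approx_ge0.
have cvgr : F x (trunc_ratio a N * y) @[N --> \oo] --> F x (a * y).
  apply: (within_continuous_cvg (F_contr x_ge0)); last exact: approx.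
    exact/nonneg/mulr_ge0.
  by move=> N; exact: approx_ge0.
have swapN N : F (trunc_ratio a N * x) y = F x (trunc_ratio a N * y).
  by rewrite biadditive_swap_ratio.
move: cvgl; rewrite (eq_cvg _ _ swapN) => cvgl.
by apply: (cvg_unique M_hausdorff cvgl); exact: cvgr.
Qed.

End BiadditiveSwap.

Local Close Scope classical_set_scope.

Section Upd.
Variables (T : Type) (n : nat).
Implicit Types (lam : 'I_n -> T) (i j k : 'I_n).

Lemma upd_eq lam i x : upd lam i x i = x.
Proof. by rewrite /upd eqxx. Qed.

Lemma upd_neq lam i j x : j != i -> upd lam i x j = lam j.
Proof. by rewrite /upd => /negbTE ->. Qed.

Lemma upd_id lam i : upd lam i (lam i) = lam.
Proof. by apply: funext => k; rewrite /upd; case: eqP => [->|]. Qed.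

Lemma upd_upd lam i x y : upd (upd lam i x) i y = upd lam i y.
Proof. by apply: funext => k; rewrite /upd; case: eqP. Qed.

Lemma upd_comm lam i j x y : i != j ->
  upd (upd lam i x) j y = upd (upd lam j y) i x.
Proof.
move=> ij; apply: funext => k; rewrite /upd.
by case: eqP => [->|//]; rewrite eq_sym (negbTE ij).
Qed.

End Upd.

Lemma upd_ge0 (R : numDomainType) n (lam : 'I_n -> R) i x :
  (forall k, 0 <= lam k) -> 0 <= x -> forall k, 0 <= upd lam i x k.
Proof. by move=> lam_ge0 x_ge0 k; rewrite /upd; case: (k == i). Qed.

Lemma prod_upd_move (R : comPzSemiRingType) n (lam : 'I_n -> R) i j : i != j ->
  \prod_k upd (upd lam j 1) i (lam j * lam i) k = \prod_k lam k.
Proof.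
move=> ij; rewrite (bigD1 i) //= [RHS](bigD1 i) //= upd_eq.
rewrite (eq_bigr (upd lam j 1)) => [|k ki]; last by rewrite upd_neq.
rewrite (bigD1 j) 1?eq_sym //= [in RHS](bigD1 j) 1?eq_sym //= upd_eq mul1r.
rewrite (eq_bigr lam) => [|k /andP[_ kj]]; last by rewrite upd_neq.
by rewrite mulrCA mulrA.
Qed.

Section SeparatelyHomomorphic.
Variables (R : realType) (M : topologicalZmodType) (n : nat).
Variable f : ('I_n -> R) -> M.
Hypothesis M_hausdorff : hausdorff_space M.
Hypothesis f_hom : sep_cont_hom f.

Lemma sep_cont_hom_swap i j a lam : i != j -> 0 <= a -> (forall k, 0 <= lam k) ->
  f (upd lam i (a * lam i)) = f (upd lam j (a * lam j)).
Proof.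
move=> ij a_ge0 lam_ge0.
pose F x y := f (upd (upd lam i x) j y).
have F_ji x y : F x y = f (upd (upd lam j y) i x) by rewrite /F upd_comm.
have F_i y : F^~ y = fun x => f (upd (upd lam j y) i x).
  by apply: funext => x; rewrite F_ji.
have -> : f (upd lam i (a * lam i)) = F (a * lam i) (lam j) by rewrite F_ji upd_id.
have -> : f (upd lam j (a * lam j)) = F (lam i) (a * lam j) by rewrite /F upd_id.
apply: biadditive_swap => //.
- by move=> y y_ge0; rewrite F_i; exact: (f_hom i (upd_ge0 j lam_ge0 y_ge0)).1.
- by move=> x x_ge0; exact: (f_hom j (upd_ge0 i lam_ge0 x_ge0)).1.
- by move=> y y_ge0; rewrite F_i; exact: (f_hom i (upd_ge0 j lam_ge0 y_ge0)).2.
- by move=> x x_ge0; exact: (f_hom j (upd_ge0 i lam_ge0 x_ge0)).2.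
Qed.

Lemma sep_cont_hom_move i j lam : i != j -> (forall k, 0 <= lam k) ->
  f lam = f (upd (upd lam j 1) i (lam j * lam i)).
Proof.
move=> ij lam_ge0.
have := sep_cont_hom_swap ij (lam_ge0 j) (upd_ge0 j lam_ge0 ler01).
have ji : j != i by rewrite eq_sym.
by rewrite upd_neq // upd_eq mulr1 upd_upd upd_id => ->.
Qed.

Lemma sep_cont_hom_collapse i lam : (forall k, 0 <= lam k) ->
  f lam = f (upd (fun=> 1) i (\prod_k lam k)).
Proof.
pose supp (mu : 'I_n -> R) := [set k | (k != i) && (mu k != 1)].
have [m] := ubnP #|supp lam|; elim: m lam => // m IH lam supp_lt lam_ge0.
have [supp0 | [j supp_j]] := set_0Vmem (supp lam).
  have lam1 k : k != i -> lam k = 1.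
    move=> ki; apply/eqP; apply: contraT => lamk.
    have : k \in supp lam by rewrite inE ki lamk.
    by rewrite supp0 inE.
  rewrite (bigD1 i) //= big1 ?mulr1; last exact: lam1.
  by congr f; apply: funext => k; rewrite /upd; case: eqP => [->|/eqP/lam1 ->].
have /andP[ji lamj1] : (j != i) && (lam j != 1) by rewrite inE in supp_j.
rewrite eq_sym in ji.
have supp_move : supp (upd (upd lam j 1) i (lam j * lam i)) = supp lam :\ j.
  apply/setP => k; rewrite !inE; case: (eqVneq k i) => [->|ki]; first by rewrite andbF.
  by rewrite upd_neq //=; case: (eqVneq k j) => [->|kj]; rewrite ?upd_eq ?upd_neq ?eqxx.
rewrite {1}(sep_cont_hom_move ji lam_ge0) -(prod_upd_move lam ji).
apply: IH; last by apply: upd_ge0; rewrite ?mulr_ge0 //; exact: upd_ge0.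
by move: supp_lt; rewrite supp_move (cardsD1 j) supp_j add1n ltnS.
Qed.

End SeparatelyHomomorphic.

Theorem proposition3p7 (R : realType) (M : topologicalZmodType) (n : nat)
  (hM : hausdorff_space M) (f : ('I_n -> R) -> M) (hf : sep_cont_hom f) :
  (forall (i j : 'I_n) (a : R) (lam : 'I_n -> R), i != j -> 0 <= a ->
     (forall k, 0 <= lam k) ->
     f (upd lam i (a * lam i)) = f (upd lam j (a * lam j))) /\
  ((0 < n)%N ->
   let g := fun x : R => f (fun k : 'I_n => if val k == 0%N then x else 1) in
   forall lam : 'I_n -> R, (forall k, 0 <= lam k) ->
     f lam = g (\prod_(k < n) lam k)).
Proof.
split; first by move=> i j a lam; exact: (sep_cont_hom_swap hM hf).
move=> n_gt0 g lam lam_ge0.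
rewrite (sep_cont_hom_collapse hM hf (Ordinal n_gt0) lam_ge0).
(* [k == Ordinal n_gt0] computes to [val k == 0]. *)
by congr f; apply: funext => k.
Qed.
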